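(* Let $h(x) := \log\Gamma(x)$ for $x>0$. For arbitrary $x>0$, \[ -\frac{1}{8x} - \frac{1}{24x(4x^2-1)_+} < h(x+1/2) - h(x) - \frac{\log x}{2} < -\frac{1}{8(x+1/2)} . \]
   Context: $(y)_+ := \max(y,0)$; for $0 < x \le 1/2$ the term $\frac{1}{24x(4x^2-1)_+}$ is interpreted as $+\infty$, so the lower bound is then $-\infty$. *)

From Stdlib Require Import Reals.
From Coquelicot Require Import Coquelicot.
Open Scope R_scope.

Definition Gamma (x : R) : R :=
  RInt_gen (fun t => Rpower t (x - 1) * exp (- t))
           (at_right 0) (Rbar_locally p_infty).

Definition h (x : R) : R := ln (Gamma x).

Definition posp (y : R) : R := Rmax y 0.

(* Log-convexity of Gamma (Cauchy-Schwarz on Euler's integral) and h (x + 1) = h x + ln x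
   are all that is used.  For g x := h (x + 1/2) - h x - ln x / 2, convexity of h gives
   -1/(4x) <= g x <= 0, while the functional equation gives
   g (x + 1) - g x = ln (x + 1/2) - (ln x + ln (x + 1)) / 2, a quantity lying strictly
   between 1/(8(x+1/2)) - 1/(8(x+3/2)) and 1/(8x) - 1/(8(x+1)).  Hence g x + 1/(8(x+1/2))
   and -1/(8x) - g x do not decrease along x, x + 1, x + 2, ... while being O(1/x), so both
   are <= 0; one more unit step makes the upper bound strict, and -1/(8x) <= g x is already
   stronger than the lower bound claimed. *)

From Stdlib Require Import Reals Lra.
From Coquelicot Require Import Coquelicot.
Open Scope R_scope.

Local Notation is_RInt_pos f l := (is_RInt_gen f (at_right 0) (Rbar_locally p_infty) l).
Local Notation ex_RInt_pos f := (ex_RInt_gen f (at_right 0) (Rbar_locally p_infty)).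

Lemma filter_prod_pos (P : R -> R -> Prop) :
  (forall a b, 0 < a -> 0 < b -> P a b) ->
  filter_prod (at_right 0) (Rbar_locally p_infty) (fun ab => P (fst ab) (snd ab)).
Proof.
  intros H. apply Filter_prod with (Q := fun a => 0 < a) (R := fun b => 0 < b).
  - exists (mkposreal 1 Rlt_0_1). intros; assumption.
  - exists 0. intros; assumption.
  - intros; simpl; auto.
Qed.

Lemma filter_prod_pos_le (P : R -> R -> Prop) :
  (forall a b, 0 < a -> a <= b -> P a b) ->
  filter_prod (at_right 0) (Rbar_locally p_infty) (fun ab => P (fst ab) (snd ab)).
Proof.
  intros H. apply Filter_prod with (Q := fun a => 0 < a < 1) (R := fun b => 1 < b).
  - exists (mkposreal 1 Rlt_0_1). intros y Hy Hy0. split; auto.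
    change (Rabs (y - 0) < 1) in Hy. rewrite Rminus_0_r, Rabs_pos_eq in Hy; lra.
  - exists 1. intros; assumption.
  - intros a b Ha Hb; simpl. apply H; lra.
Qed.

Lemma filterlim_at_right_0 (G : R -> R) (L : R) :
  (forall e, 0 < e -> exists d, 0 < d /\ forall t, 0 < t < d -> Rabs (G t - L) < e) ->
  filterlim G (at_right 0) (locally L).
Proof.
  intros H P [e He]. destruct (H e (cond_pos e)) as [d [Hd Hd']].
  exists (mkposreal d Hd). intros y Hy Hy0. apply He, Hd'. split; auto.
  change (Rabs (y - 0) < d) in Hy. rewrite Rminus_0_r, Rabs_pos_eq in Hy; lra.
Qed.

Lemma filterlim_p_infty (G : R -> R) (L : R) :
  (forall e, 0 < e -> exists M, forall t, M < t -> Rabs (G t - L) < e) ->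
  filterlim G (Rbar_locally p_infty) (locally L).
Proof.
  intros H P [e He]. destruct (H e (cond_pos e)) as [M HM].
  exists M. intros y Hy. apply He, HM, Hy.
Qed.

Lemma pos_between (a b x : R) : 0 < a -> 0 < b -> Rmin a b <= x <= Rmax a b -> 0 < x.
Proof. intros Ha Hb [Hx _]. pose proof (Rmin_glb_lt _ _ _ Ha Hb). lra. Qed.

Lemma ex_RInt_continuous_pos (f : R -> R) (a b : R) :
  (forall t, 0 < t -> continuous f t) -> 0 < a -> 0 < b -> ex_RInt f a b.
Proof.
  intros Hc Ha Hb. apply (@ex_RInt_continuous R_CompleteNormedModule).
  intros z Hz. apply Hc, (pos_between a b z Ha Hb Hz).
Qed.

Section Antiderivative.

Variables (F g : R -> R).
Hypothesis F_deriv : forall t, 0 < t -> is_derive F t (g t) /\ continuous g t.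

Lemma is_RInt_antiderivative_pos (a b : R) :
  0 < a -> 0 < b -> is_RInt g a b (F b - F a).
Proof.
  intros Ha Hb. apply (is_RInt_derive F g); intros x Hx; apply F_deriv;
    exact (pos_between a b x Ha Hb Hx).
Qed.

Lemma is_RInt_gen_antiderivative (La Lb : R) :
  filterlim F (at_right 0) (locally La) ->
  filterlim F (Rbar_locally p_infty) (locally Lb) ->
  is_RInt_pos g (Lb - La).
Proof.
  intros HA HB.
  apply filterlimi_lim_ext_loc with (f := fun ab => F (snd ab) - F (fst ab)).
  - apply (filter_prod_pos (fun a b => is_RInt g a b (F b - F a))).
    exact is_RInt_antiderivative_pos.
  - apply (filterlim_comp_2 (G := locally Lb) (H := locally (opp La))
             (fun ab => F (snd ab)) (fun ab => opp (F (fst ab))) plus).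
    + eapply filterlim_comp; [apply filterlim_snd | exact HB].
    + eapply filterlim_comp; [eapply filterlim_comp; [apply filterlim_fst | exact HA] |].
      apply (@filterlim_opp R_AbsRing R_NormedModule).
    + apply (@filterlim_plus R_AbsRing R_NormedModule).
Qed.

Lemma abs_RInt_le_antiderivative (f : R -> R) (a b : R) :
  (forall t, 0 < t -> continuous f t) ->
  (forall t, 0 < t -> Rabs (f t) <= g t) ->
  0 < a -> 0 < b -> Rabs (RInt f a b) <= Rabs (F b - F a).
Proof.
  intros Hc Hle.
  assert (Hcg : forall t, 0 < t -> continuous g t) by (intros; apply F_deriv; auto).
  assert (ordered : forall a b, 0 < a -> 0 < b -> a <= b ->
                      Rabs (RInt f a b) <= Rabs (F b - F a)).
  { clear a b. intros a b Ha Hb Hab.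
    apply Rle_trans with (RInt (fun t => Rabs (f t)) a b).
    { apply abs_RInt_le; auto. apply ex_RInt_continuous_pos; auto. }
    apply Rle_trans with (RInt g a b).
    { apply RInt_le; auto.
      - apply ex_RInt_continuous_pos; auto. intros t Ht.
        apply (continuous_comp f Rabs); auto. apply continuous_Rabs.
      - apply ex_RInt_continuous_pos; auto.
      - intros t Ht. apply Hle. lra. }
    rewrite (is_RInt_unique g a b (F b - F a)) by (apply is_RInt_antiderivative_pos; auto).
    apply Rle_abs. }
  intros Ha Hb. destruct (Rle_dec a b) as [Hab|Hab]; [apply ordered; auto|].
  rewrite <- (opp_RInt_swap f b a) by (apply ex_RInt_continuous_pos; auto).
  change (Rabs (- RInt f b a) <= Rabs (F b - F a)).
  rewrite Rabs_Ropp, Rabs_minus_sym. apply ordered; auto. lra.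
Qed.

Lemma abs_RInt_sub_le_antiderivative (f : R -> R) (a b a' b' : R) :
  (forall t, 0 < t -> continuous f t) ->
  (forall t, 0 < t -> Rabs (f t) <= g t) ->
  0 < a -> 0 < b -> 0 < a' -> 0 < b' ->
  Rabs (RInt f a' b' - RInt f a b) <= Rabs (F a' - F a) + Rabs (F b - F b').
Proof.
  intros Hc Hle Ha Hb Ha' Hb'.
  rewrite <- (RInt_Chasles f a a' b), <- (RInt_Chasles f a' b' b)
    by (apply ex_RInt_continuous_pos; auto).
  pose proof (abs_RInt_le_antiderivative f a a' Hc Hle Ha Ha').
  pose proof (abs_RInt_le_antiderivative f b' b Hc Hle Hb' Hb).
  unfold plus; simpl.
  replace (RInt f a' b' - (RInt f a a' + (RInt f a' b' + RInt f b' b)))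
    with (- RInt f a a' + - RInt f b' b) by ring.
  eapply Rle_trans; [apply Rabs_triang|]. rewrite !Rabs_Ropp. lra.
Qed.

(* Cauchy criterion at both ends: the variation of [RInt f] is controlled by that of [F]. *)
Lemma ex_RInt_gen_dominated (f : R -> R) (La Lb : R) :
  (forall t, 0 < t -> continuous f t) ->
  (forall t, 0 < t -> Rabs (f t) <= g t) ->
  filterlim F (at_right 0) (locally La) ->
  filterlim F (Rbar_locally p_infty) (locally Lb) ->
  ex_RInt_pos f.
Proof.
  intros Hc Hle HA HB.
  refine (proj1 (filterlimi_locally_cauchy (U := R_CompleteSpace)
    (FF := @filter_prod_proper _ _ _ _ (at_right_proper_filter 0) (Rbar_locally_filter p_infty))
    (fun ab => is_RInt f (fst ab) (snd ab)) _) _).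
  - apply (filter_prod_pos (fun a b => (exists y, is_RInt f a b y) /\
       forall y1 y2, is_RInt f a b y1 -> is_RInt f a b y2 -> y1 = y2)).
    intros a b Ha Hb. split.
    + exists (RInt f a b). apply (@RInt_correct R_CompleteNormedModule).
      apply ex_RInt_continuous_pos; auto.
    + intros y1 y2 H1 H2. rewrite <- (is_RInt_unique _ _ _ _ H1). apply is_RInt_unique; auto.
  - intros eps.
    assert (e4 : 0 < eps / 4) by (destruct eps; simpl; lra).
    destruct (HA _ (locally_ball La (mkposreal _ e4))) as [d Hd].
    destruct (HB _ (locally_ball Lb (mkposreal _ e4))) as [M HM].
    exists (fun ab => (0 < fst ab /\ Rabs (F (fst ab) - La) < eps / 4) /\
                      (0 < snd ab /\ Rabs (F (snd ab) - Lb) < eps / 4)).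
    split.
    + apply Filter_prod with (Q := fun a => 0 < a /\ Rabs (F a - La) < eps / 4)
                             (R := fun b => 0 < b /\ Rabs (F b - Lb) < eps / 4).
      * exists d. intros y Hy Hy0. split; [exact Hy0 | apply Hd; auto].
      * exists (Rmax M 0). intros y Hy. split.
        -- pose proof (Rmax_r M 0). lra.
        -- apply HM. pose proof (Rmax_l M 0). lra.
      * intros; simpl; auto.
    + intros [a b] [a' b'] [[Ha HFa] [Hb HFb]] [[Ha' HFa'] [Hb' HFb']] u v Hu Hv.
      simpl in *. change (Rabs (v - u) < eps).
      rewrite <- (is_RInt_unique _ _ _ _ Hu), <- (is_RInt_unique _ _ _ _ Hv).
      eapply Rle_lt_trans; [apply abs_RInt_sub_le_antiderivative; auto|].
      apply Rabs_def2 in HFa; apply Rabs_def2 in HFa';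
        apply Rabs_def2 in HFb; apply Rabs_def2 in HFb'.
      assert (Rabs (F a' - F a) < eps / 2) by (apply Rabs_def1; lra).
      assert (Rabs (F b - F b') < eps / 2) by (apply Rabs_def1; lra).
      lra.
Qed.

End Antiderivative.

Lemma is_RInt_gen_ge0 (g : R -> R) (l : R) :
  is_RInt_pos g l -> (forall t, 0 < t -> 0 <= g t) -> 0 <= l.
Proof.
  intros Hl Hg.
  assert (K : norm l <= l).
  { apply (@RInt_gen_norm R_CompleteNormedModule _ _
             (at_right_proper_filter 0) (Rbar_locally_filter p_infty) g g l l); auto.
    - exact (filter_prod_pos_le (fun a b => a <= b) (fun a b _ H => H)).
    - apply (filter_prod_pos_le (fun a b => forall x, a <= x <= b -> norm (g x) <= g x)).
      intros a b Ha _ x Hx. change (Rabs (g x) <= g x).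
      rewrite Rabs_pos_eq; [lra | apply Hg; lra]. }
  change (Rabs l <= l) in K. pose proof (Rabs_pos l). lra.
Qed.

Lemma ln_le_sub_1 (z : R) : 0 < z -> ln z <= z - 1.
Proof. intros Hz. pose proof (exp_ineq1_le (ln z)) as H. rewrite exp_ln in H; lra. Qed.

Lemma exp_le_exp (x y : R) : x <= y -> exp x <= exp y.
Proof.
  intros [H|H]; [left; apply exp_increasing, H | right; subst; reflexivity].
Qed.

Lemma mul_ln_le (p t : R) : 0 < p -> 0 < t -> p * ln t <= t / 2 + p * (ln (2 * p) - 1).
Proof.
  intros Hp Ht.
  pose proof (ln_le_sub_1 (t / (2 * p)) ltac:(apply Rdiv_lt_0_compat; lra)) as H.
  unfold Rdiv in H. rewrite ln_mult, ln_Rinv in H by (try apply Rinv_0_lt_compat; lra).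
  apply (Rmult_le_compat_l p) in H; [|lra].
  replace (p * (t * / (2 * p) - 1)) with (t / 2 - p) in H by (field; lra). lra.
Qed.

Lemma Rpower_lt_near_0 (s e : R) :
  0 < s -> 0 < e -> exists d, 0 < d /\ forall t, 0 < t < d -> Rpower t s < e.
Proof.
  intros Hs He. exists (Rpower e (/ s)). split; [apply exp_pos|].
  intros t Ht. replace e with (Rpower (Rpower e (/ s)) s).
  - apply Rlt_Rpower_l; lra.
  - rewrite Rpower_mult, Rinv_l, Rpower_1; lra.
Qed.

Lemma Rpower_gt_near_p_infty (s A : R) :
  0 < s -> 0 < A -> exists M, forall t, M < t -> A < Rpower t s.
Proof.
  intros Hs HA. exists (Rpower A (/ s)). intros t Ht.
  replace A with (Rpower (Rpower A (/ s)) s).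
  - apply Rlt_Rpower_l; [lra | split; [apply exp_pos | exact Ht]].
  - rewrite Rpower_mult, Rinv_l, Rpower_1; lra.
Qed.

Lemma Rpower_pred (t s : R) : 0 < t -> Rpower t (s - 1) = Rpower t s / t.
Proof.
  intros Ht. unfold Rpower.
  replace ((s - 1) * ln t) with (s * ln t + - ln t) by ring.
  rewrite exp_plus, exp_Ropp, exp_ln; auto.
Qed.

Lemma exp_neg_mul_sq_one_add_Rpower_bounded (s : R) :
  0 < s -> exists K, 0 < K /\ forall t, 0 < t -> exp (- t) * (1 + Rpower t s) ^ 2 <= K.
Proof.
  intros Hs. set (c := exp (2 * s * (ln (2 * (2 * s)) - 1))).
  assert (Hc : 0 < c) by apply exp_pos.
  exists (2 + 2 * c). split; [lra|]. intros t Ht.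
  assert (Hsq : exp (- t) * Rpower t s ^ 2 <= c).
  { replace (exp (- t) * Rpower t s ^ 2) with (exp (2 * s * ln t - t))
      by (unfold Rpower; simpl; rewrite Rmult_1_r, <- !exp_plus; f_equal; ring).
    unfold c. apply exp_le_exp. pose proof (mul_ln_le (2 * s) t ltac:(lra) Ht). lra. }
  assert (He1 : exp (- t) <= 1) by (rewrite <- exp_0; apply exp_le_exp; lra).
  pose proof (exp_pos (- t)) as He.
  set (u := Rpower t s) in *; set (E := exp (- t)) in *.
  assert (0 <= E * (u - 1) ^ 2) by (apply Rmult_le_pos; [lra | apply pow2_ge_0]).
  nra.
Qed.

Lemma Rpower_ratio_at_right_0 (s c : R) :
  0 < s -> 0 < c ->
  filterlim (fun t => c * (Rpower t s / (1 + Rpower t s))) (at_right 0) (locally 0).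
Proof.
  intros Hs Hc. apply filterlim_at_right_0. intros e He.
  destruct (Rpower_lt_near_0 s (e / c) Hs) as [d [Hd Hsmall]]; [apply Rdiv_lt_0_compat; auto|].
  exists d. split; auto. intros t Ht. specialize (Hsmall t Ht).
  pose proof (exp_pos (s * ln t)) as Hu. fold (Rpower t s) in Hu.
  rewrite Rminus_0_r, Rabs_pos_eq
    by (apply Rmult_le_pos; [lra | apply Rlt_le, Rdiv_lt_0_compat; lra]).
  apply Rle_lt_trans with (c * Rpower t s).
  - apply Rmult_le_compat_l; [lra|].
    apply (Rmult_le_reg_r (1 + Rpower t s)); [lra|].
    unfold Rdiv. rewrite Rmult_assoc, Rinv_l; nra.
  - replace e with (c * (e / c)) by (field; lra). apply Rmult_lt_compat_l; auto.
Qed.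

Lemma Rpower_ratio_at_p_infty (s c : R) :
  0 < s -> 0 < c ->
  filterlim (fun t => c * (Rpower t s / (1 + Rpower t s))) (Rbar_locally p_infty) (locally c).
Proof.
  intros Hs Hc. apply filterlim_p_infty. intros e He.
  assert (Hce : 0 < c / e) by (apply Rdiv_lt_0_compat; auto).
  destruct (Rpower_gt_near_p_infty s (c / e) Hs Hce) as [M Hlarge].
  exists M. intros t Ht. specialize (Hlarge t Ht) as Hgt.
  assert (Hu : 0 < 1 + Rpower t s) by lra.
  replace (c * (Rpower t s / (1 + Rpower t s)) - c) with (- (c / (1 + Rpower t s)))
    by (field; lra).
  rewrite Rabs_Ropp, Rabs_pos_eq by (apply Rlt_le, Rdiv_lt_0_compat; lra).
  apply (Rmult_lt_reg_r (1 + Rpower t s)); [lra|].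
  unfold Rdiv at 1. rewrite Rmult_assoc, Rinv_l by lra.
  apply (Rmult_lt_compat_l e) in Hgt; [|lra].
  replace (e * (c / e)) with c in Hgt by (field; lra). nra.
Qed.

Lemma Rpower_mul_exp_neg_at_right_0 (s : R) :
  0 < s -> filterlim (fun t => Rpower t s * exp (- t)) (at_right 0) (locally 0).
Proof.
  intros Hs. apply filterlim_at_right_0. intros e He.
  destruct (Rpower_lt_near_0 s e Hs He) as [d [Hd Hsmall]].
  exists d. split; auto. intros t Ht. specialize (Hsmall t Ht).
  assert (0 < exp (- t) <= 1)
    by (split; [apply exp_pos | rewrite <- exp_0; apply exp_le_exp; lra]).
  pose proof (exp_pos (s * ln t)). unfold Rpower in *.
  rewrite Rminus_0_r, Rabs_pos_eq; nra.
Qed.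

Lemma Rpower_mul_exp_neg_at_p_infty (s : R) :
  0 < s -> filterlim (fun t => Rpower t s * exp (- t)) (Rbar_locally p_infty) (locally 0).
Proof.
  intros Hs. apply filterlim_p_infty. intros e He.
  set (c := s * (ln (2 * s) - 1)).
  exists (Rmax 1 (2 * (c - ln e))). intros t Ht.
  assert (Ht1 : 0 < t) by (pose proof (Rmax_l 1 (2 * (c - ln e))); lra).
  assert (Ht2 : 2 * (c - ln e) < t) by (pose proof (Rmax_r 1 (2 * (c - ln e))); lra).
  rewrite Rminus_0_r, Rabs_pos_eq by (apply Rlt_le, Rmult_lt_0_compat; apply exp_pos).
  unfold Rpower. rewrite <- exp_plus, <- (exp_ln e He). apply exp_increasing.
  pose proof (mul_ln_le s t Hs Ht1). unfold c in *. lra.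
Qed.

Definition gamma_integrand (s t : R) : R := Rpower t (s - 1) * exp (- t).

Lemma continuous_gamma_integrand (s t : R) : 0 < t -> continuous (gamma_integrand s) t.
Proof.
  intros Ht. apply (@ex_derive_continuous R_AbsRing R_NormedModule).
  unfold gamma_integrand, Rpower. auto_derive. lra.
Qed.

Lemma gamma_integrand_pos (s t : R) : 0 < gamma_integrand s t.
Proof. apply Rmult_lt_0_compat; apply exp_pos. Qed.

Lemma gamma_integrand_le (s K t : R) :
  0 < t -> exp (- t) * (1 + Rpower t s) ^ 2 <= K ->
  gamma_integrand s t <= K * (Rpower t s / t) / (1 + Rpower t s) ^ 2.
Proof.
  intros Ht Hbound. pose proof (exp_pos (s * ln t)) as Hu. fold (Rpower t s) in Hu.
  unfold gamma_integrand. rewrite Rpower_pred by exact Ht.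
  assert (Hq : 0 < Rpower t s / t) by (apply Rdiv_lt_0_compat; auto).
  assert (H1u : 0 < (1 + Rpower t s) ^ 2) by (apply pow_lt; lra).
  unfold Rdiv at 2. rewrite (Rmult_comm K), Rmult_assoc. apply Rmult_le_compat_l; [lra|].
  apply (Rmult_le_reg_r ((1 + Rpower t s) ^ 2)); auto.
  rewrite Rmult_assoc, Rinv_l; lra.
Qed.

Lemma ex_RInt_gen_gamma_integrand (s : R) : 0 < s -> ex_RInt_pos (gamma_integrand s).
Proof.
  intros Hs. destruct (exp_neg_mul_sq_one_add_Rpower_bounded s Hs) as [K [HK Hbound]].
  assert (HKs : 0 < K / s) by (apply Rdiv_lt_0_compat; auto).
  refine (ex_RInt_gen_dominated
            (fun t => K / s * (Rpower t s / (1 + Rpower t s)))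
            (fun t => K * (Rpower t s / t) / (1 + Rpower t s) ^ 2) _
            (gamma_integrand s) 0 (K / s) _ _
            (Rpower_ratio_at_right_0 s _ Hs HKs) (Rpower_ratio_at_p_infty s _ Hs HKs)).
  - intros t Ht. pose proof (exp_pos (s * ln t)). unfold Rpower. split.
    + auto_derive; [lra|]. field. lra.
    + apply (@ex_derive_continuous R_AbsRing R_NormedModule). auto_derive. nra.
  - intros t Ht. apply continuous_gamma_integrand, Ht.
  - intros t Ht. rewrite Rabs_pos_eq by (left; apply gamma_integrand_pos).
    apply gamma_integrand_le; auto.
Qed.

Lemma is_RInt_gen_Gamma (s : R) : 0 < s -> is_RInt_pos (gamma_integrand s) (Gamma s).
Proof.
  intros Hs. apply (@RInt_gen_correct R_CompleteNormedModule _ _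
    (Proper_StrongProper _ (at_right_proper_filter 0))
    (Proper_StrongProper _ (Rbar_locally_filter p_infty))).
  apply ex_RInt_gen_gamma_integrand, Hs.
Qed.

Lemma Gamma_ge0 (s : R) : 0 < s -> 0 <= Gamma s.
Proof.
  intros Hs. apply (is_RInt_gen_ge0 (gamma_integrand s)); [apply is_RInt_gen_Gamma, Hs|].
  intros t _. apply Rlt_le, gamma_integrand_pos.
Qed.

(* Integration by parts, with boundary term [t ^ s * exp (- t)] vanishing at both ends. *)
Lemma Gamma_succ (s : R) : 0 < s -> Gamma (s + 1) = s * Gamma s.
Proof.
  intros Hs.
  assert (Hparts : is_RInt_pos
            (fun t => s * gamma_integrand s t - gamma_integrand (s + 1) t) (0 - 0)).
  { apply (is_RInt_gen_antiderivative (fun t => Rpower t s * exp (- t))).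
    - intros t Ht. unfold gamma_integrand. rewrite Rpower_pred by exact Ht.
      replace (s + 1 - 1) with s by ring. unfold Rpower. split.
      + auto_derive; [lra|]. field. lra.
      + apply (@ex_derive_continuous R_AbsRing R_NormedModule). auto_derive. lra.
    - apply Rpower_mul_exp_neg_at_right_0, Hs.
    - apply Rpower_mul_exp_neg_at_p_infty, Hs. }
  pose proof (is_RInt_gen_scal _ s _ (is_RInt_gen_Gamma s Hs)) as Hscal.
  pose proof (is_RInt_gen_minus _ _ _ _ Hscal Hparts) as Hdiff.
  change (RInt_gen (gamma_integrand (s + 1)) (at_right 0) (Rbar_locally p_infty) = s * Gamma s).
  apply is_RInt_gen_unique.
  replace (s * Gamma s) with (minus (scal s (Gamma s)) (0 - 0))
    by (unfold minus, plus, opp, scal; simpl; unfold mult; simpl; ring).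
  eapply is_RInt_gen_ext; [| exact Hdiff].
  apply (filter_prod_pos (fun a b => forall x, Rmin a b < x < Rmax a b -> _ = _)).
  intros a b _ _ x _. unfold minus, plus, opp, scal; simpl; unfold mult; simpl. ring.
Qed.

Lemma Gamma_1 : Gamma 1 = 1.
Proof.
  change (RInt_gen (gamma_integrand 1) (at_right 0) (Rbar_locally p_infty) = 1).
  apply is_RInt_gen_unique. replace 1 with (0 - - 1) at 2 by ring.
  eapply is_RInt_gen_ext.
  2:{ apply (is_RInt_gen_antiderivative (fun t => - exp (- t)) (fun t => exp (- t))).
      - intros t Ht. split.
        + auto_derive; auto. ring.
        + apply (@ex_derive_continuous R_AbsRing R_NormedModule). auto_derive. auto.
      - apply filterlim_at_right_0. intros e He. exists e. split; auto. intros t [Ht Hte].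
        pose proof (exp_ineq1_le (- t)).
        assert (exp (- t) <= 1) by (rewrite <- exp_0; apply exp_le_exp; lra).
        rewrite Rabs_pos_eq; lra.
      - apply filterlim_p_infty. intros e He. exists (- ln e). intros t Ht.
        rewrite Rminus_0_r, Rabs_Ropp, Rabs_pos_eq by (left; apply exp_pos).
        rewrite <- (exp_ln e He). apply exp_increasing. lra. }
  apply (filter_prod_pos (fun a b => forall x, Rmin a b < x < Rmax a b -> _ = _)).
  intros a b _ _ x _. unfold gamma_integrand, Rpower.
  rewrite Rminus_diag, Rmult_0_l, exp_0, Rmult_1_l. reflexivity.
Qed.

Lemma Gamma_nat_succ_pos (n : nat) : 0 < Gamma (INR n + 1).
Proof.
  induction n as [|n IHn].
  - rewrite Rplus_0_l, Gamma_1. lra.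
  - pose proof (pos_INR n). rewrite S_INR, Gamma_succ by lra.
    apply Rmult_lt_0_compat; lra.
Qed.

Lemma sq_le_mul_of_quadratic_nonneg (A M B : R) :
  0 <= A -> (forall l, 0 <= l ^ 2 * A + 2 * l * M + B) -> M ^ 2 <= A * B.
Proof.
  intros HA H. destruct (Rle_lt_or_eq_dec _ _ HA) as [HA'|<-].
  - specialize (H (- M / A)).
    replace ((- M / A) ^ 2 * A + 2 * (- M / A) * M + B) with (B - M ^ 2 / A) in H
      by (field; lra).
    apply (Rmult_le_reg_r (/ A)); [apply Rinv_0_lt_compat, HA'|].
    replace (A * B * / A) with B by (field; lra). unfold Rdiv in H. lra.
  - destruct (Req_dec M 0) as [->|HM]; [lra|].
    specialize (H (- (B + 1) / (2 * M))).
    replace ((- (B + 1) / (2 * M)) ^ 2 * 0 + 2 * (- (B + 1) / (2 * M)) * M + B) with (-1) in H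
      by (field; auto). lra.
Qed.

(* Cauchy-Schwarz: integrate [(l t^((a-1)/2) + t^((b-1)/2))^2 e^(-t) >= 0]
   and take the discriminant in [l]. *)
Lemma Gamma_midpoint_sq_le (a b : R) :
  0 < a -> 0 < b -> Gamma ((a + b) / 2) ^ 2 <= Gamma a * Gamma b.
Proof.
  intros Ha Hb. set (m := (a + b) / 2). assert (Hm : 0 < m) by (unfold m; lra).
  apply sq_le_mul_of_quadratic_nonneg; [apply Gamma_ge0, Ha|]. intros l.
  pose proof (is_RInt_gen_plus _ _ _ _
    (is_RInt_gen_plus _ _ _ _
       (is_RInt_gen_scal _ (l ^ 2) _ (is_RInt_gen_Gamma a Ha))
       (is_RInt_gen_scal _ (2 * l) _ (is_RInt_gen_Gamma m Hm)))
    (is_RInt_gen_Gamma b Hb)) as Hsum.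
  apply is_RInt_gen_ge0 in Hsum.
  - revert Hsum. unfold plus, scal; simpl; unfold mult; simpl. lra.
  - intros t Ht. unfold plus, scal; simpl; unfold mult; simpl.
    unfold gamma_integrand, Rpower.
    set (A := exp ((a - 1) / 2 * ln t)). set (B := exp ((b - 1) / 2 * ln t)).
    replace (exp ((a - 1) * ln t)) with (A * A) by (unfold A; rewrite <- exp_plus; f_equal; field).
    replace (exp ((b - 1) * ln t)) with (B * B) by (unfold B; rewrite <- exp_plus; f_equal; field).
    replace (exp ((m - 1) * ln t)) with (A * B)
      by (unfold A, B, m; rewrite <- exp_plus; f_equal; field).
    pose proof (exp_pos (- t)).
    match goal with |- 0 <= ?X => replace X with ((l * A + B) ^ 2 * exp (- t)) by ring end.
    apply Rmult_le_pos; [apply pow2_ge_0 | lra].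
Qed.

(* [Gamma (n + 1) ^ 2 <= Gamma s * Gamma (2 (n + 1) - s)], and [Gamma (n + 1) > 0]. *)
Lemma Gamma_pos (s : R) : 0 < s -> 0 < Gamma s.
Proof.
  intros Hs. destruct (INR_unbounded s) as [n Hn].
  set (b := 2 * (INR n + 1) - s). assert (Hb : 0 < b) by (unfold b; lra).
  pose proof (Gamma_midpoint_sq_le s b Hs Hb) as H.
  replace ((s + b) / 2) with (INR n + 1) in H by (unfold b; field).
  pose proof (Gamma_nat_succ_pos n). pose proof (Gamma_ge0 b Hb).
  destruct (Rle_lt_or_eq_dec _ _ (Gamma_ge0 s Hs)) as [|E]; auto.
  rewrite <- E in H. nra.
Qed.

Lemma h_succ (s : R) : 0 < s -> h (s + 1) = ln s + h s.
Proof. intros Hs. unfold h. rewrite Gamma_succ, ln_mult; auto. apply Gamma_pos, Hs. Qed.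

Lemma h_midpoint_convex (a b : R) : 0 < a -> 0 < b -> 2 * h ((a + b) / 2) <= h a + h b.
Proof.
  intros Ha Hb. unfold h.
  assert (Hm : 0 < Gamma ((a + b) / 2)) by (apply Gamma_pos; lra).
  rewrite <- ln_mult by (apply Gamma_pos; auto).
  replace (2 * ln (Gamma ((a + b) / 2))) with (ln (Gamma ((a + b) / 2) ^ 2))
    by (simpl; rewrite Rmult_1_r, ln_mult; auto; ring).
  apply ln_le; [apply pow_lt, Hm | apply Gamma_midpoint_sq_le; auto].
Qed.

Definition half_shift_gap (x : R) : R := h (x + 1 / 2) - h x - ln x / 2.

Definition log_midpoint_excess (x : R) : R := ln (x + 1 / 2) - (ln x + ln (x + 1)) / 2.

Lemma half_shift_gap_succ (x : R) :
  0 < x -> half_shift_gap (x + 1) = half_shift_gap x + log_midpoint_excess x.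
Proof.
  intros Hx. unfold half_shift_gap, log_midpoint_excess.
  replace (x + 1 + 1 / 2) with (x + 1 / 2 + 1) by ring.
  rewrite !h_succ by lra. field.
Qed.

Lemma half_shift_gap_le0 (x : R) : 0 < x -> half_shift_gap x <= 0.
Proof.
  intros Hx. pose proof (h_midpoint_convex x (x + 1) Hx ltac:(lra)) as H.
  replace ((x + (x + 1)) / 2) with (x + 1 / 2) in H by field.
  rewrite h_succ in H by exact Hx. unfold half_shift_gap. lra.
Qed.

Lemma half_shift_gap_ge (x : R) : 0 < x -> - (1 / (4 * x)) <= half_shift_gap x.
Proof.
  intros Hx. pose proof (h_midpoint_convex (x + 1 / 2) (x + 1 / 2 + 1) ltac:(lra) ltac:(lra)) as H.
  replace ((x + 1 / 2 + (x + 1 / 2 + 1)) / 2) with (x + 1) in H by field.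
  rewrite !h_succ in H by lra.
  pose proof (ln_le_sub_1 ((x + 1 / 2) / x) ltac:(apply Rdiv_lt_0_compat; lra)) as L.
  unfold Rdiv at 1 in L. rewrite ln_mult, ln_Rinv in L by (try apply Rinv_0_lt_compat; lra).
  replace ((x + 1 / 2) / x - 1) with (2 * (1 / (4 * x))) in L by (field; lra).
  unfold half_shift_gap. lra.
Qed.

Lemma log_midpoint_excess_gt (x : R) :
  0 < x -> 1 / (8 * (x + 1 / 2)) - 1 / (8 * (x + 3 / 2)) < log_midpoint_excess x.
Proof.
  intros Hx. set (y := x + 1 / 2). assert (Hy : 0 < y) by (unfold y; lra).
  pose proof (ln_le_sub_1 (x * (x + 1) / (y * y)) ltac:(apply Rdiv_lt_0_compat; nra)) as L.
  unfold Rdiv at 1 in L.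
  rewrite ln_mult, ln_mult, ln_Rinv, ln_mult in L by (try apply Rinv_0_lt_compat; nra).
  replace (x * (x + 1) / (y * y) - 1) with (- (2 * (1 / (8 * y ^ 2)))) in L
    by (unfold y; field; lra).
  replace (1 / (8 * y) - 1 / (8 * (x + 3 / 2))) with (1 / (8 * (y * (y + 1))))
    by (unfold y; field; lra).
  assert (1 / (8 * (y * (y + 1))) < 1 / (8 * y ^ 2)).
  { unfold Rdiv. rewrite !Rmult_1_l.
    apply Rinv_lt_contravar; [apply Rmult_lt_0_compat|]; try (apply Rmult_lt_0_compat); nra. }
  unfold log_midpoint_excess. fold y. lra.
Qed.

Lemma log_midpoint_excess_le (x : R) :
  0 < x -> log_midpoint_excess x <= 1 / (8 * x) - 1 / (8 * (x + 1)).
Proof.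
  intros Hx. set (y := x + 1 / 2). assert (Hy : 0 < y) by (unfold y; lra).
  pose proof (ln_le_sub_1 (y * y / (x * (x + 1))) ltac:(apply Rdiv_lt_0_compat; nra)) as L.
  unfold Rdiv at 1 in L.
  rewrite ln_mult, ln_mult, ln_Rinv, ln_mult in L by (try apply Rinv_0_lt_compat; nra).
  replace (y * y / (x * (x + 1)) - 1) with (2 * (1 / (8 * x) - 1 / (8 * (x + 1)))) in L
    by (unfold y; field; lra).
  unfold log_midpoint_excess. fold y. lra.
Qed.

Lemma nonpos_of_shift_nondecreasing (phi : R -> R) :
  (forall y, 0 < y -> phi y <= phi (y + 1)) ->
  (forall y, 0 < y -> phi y <= 1 / y) ->
  forall x, 0 < x -> phi x <= 0.
Proof.
  intros Hmono Hbound x Hx.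
  assert (Hshift : forall n, phi x <= phi (x + INR n)).
  { induction n as [|n IHn]; [rewrite Rplus_0_r; lra|].
    rewrite S_INR, <- Rplus_assoc. pose proof (pos_INR n).
    apply (Rle_trans _ _ _ IHn), Hmono. lra. }
  apply Rle_plus_epsilon. intros e He.
  destruct (INR_unbounded (/ e)) as [n Hn]. pose proof (pos_INR n).
  apply (Rle_trans _ _ _ (Hshift n)), (Rle_trans _ _ _ (Hbound (x + INR n) ltac:(lra))).
  rewrite Rplus_0_l, <- (Rinv_inv e). unfold Rdiv. rewrite Rmult_1_l.
  pose proof (Rinv_0_lt_compat e He).
  apply Rlt_le, Rinv_lt_contravar; [apply Rmult_lt_0_compat|]; lra.
Qed.

Lemma half_shift_gap_ge_neg (x : R) : 0 < x -> - (1 / (8 * x)) <= half_shift_gap x.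
Proof.
  intros Hx.
  enough (- (1 / (8 * x)) - half_shift_gap x <= 0) by lra.
  revert x Hx. apply nonpos_of_shift_nondecreasing.
  - intros y Hy. rewrite half_shift_gap_succ by exact Hy.
    pose proof (log_midpoint_excess_le y Hy). lra.
  - intros y Hy. pose proof (half_shift_gap_ge y Hy).
    replace (1 / y) with (1 / (8 * y) + 7 * (1 / (8 * y))) by (field; lra).
    replace (1 / (4 * y)) with (2 * (1 / (8 * y))) in * by (field; lra).
    assert (0 < 1 / (8 * y)) by (apply Rdiv_lt_0_compat; lra). lra.
Qed.

Lemma half_shift_gap_le_neg (x : R) : 0 < x -> half_shift_gap x <= - (1 / (8 * (x + 1 / 2))).
Proof.
  intros Hx.
  enough (half_shift_gap x + 1 / (8 * (x + 1 / 2)) <= 0) by lra.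
  revert x Hx. apply nonpos_of_shift_nondecreasing.
  - intros y Hy. rewrite half_shift_gap_succ by exact Hy.
    replace (y + 1 + 1 / 2) with (y + 3 / 2) by field.
    pose proof (log_midpoint_excess_gt y Hy). lra.
  - intros y Hy. pose proof (half_shift_gap_le0 y Hy).
    assert (1 / (8 * (y + 1 / 2)) <= 1 / y).
    { unfold Rdiv. rewrite !Rmult_1_l. apply Rinv_le_contravar; lra. }
    lra.
Qed.

Lemma half_shift_gap_lt (x : R) : 0 < x -> half_shift_gap x < - (1 / (8 * (x + 1 / 2))).
Proof.
  intros Hx. pose proof (half_shift_gap_le_neg (x + 1) ltac:(lra)) as H.
  rewrite half_shift_gap_succ in H by exact Hx.
  replace (x + 1 + 1 / 2) with (x + 3 / 2) in H by field.
  pose proof (log_midpoint_excess_gt x Hx). lra.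
Qed.

Theorem lemma12 (x : R) (hx : 0 < x) :
  (0 < posp (4 * x ^ 2 - 1) ->
     - (1 / (8 * x)) - 1 / (24 * x * posp (4 * x ^ 2 - 1))
       < h (x + 1 / 2) - h x - ln x / 2)
  /\ h (x + 1 / 2) - h x - ln x / 2 < - (1 / (8 * (x + 1 / 2))).
Proof.
  change (h (x + 1 / 2) - h x - ln x / 2) with (half_shift_gap x). split.
  - intros Hp. pose proof (half_shift_gap_ge_neg x hx).
    assert (0 < 1 / (24 * x * posp (4 * x ^ 2 - 1))).
    { apply Rdiv_lt_0_compat; [lra|]. apply Rmult_lt_0_compat; lra. }
    lra.
  - apply half_shift_gap_lt, hx.
Qed.
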